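(* Let $\mathcal{L}=\{S_1,\dots,S_k\}$ be a finite list of integer compositions (finite words over the alphabet of positive integers) such that no word on the list is contained as a subword (block of consecutive letters) in any other word of the list. Suppose further that all correlation polynomials $c_{ij}(x,q)=c_{S_iS_j}(x,q)$ with $i\neq j$ vanish identically. Let \[F(x,q)=\sum_{\sigma}x^{w(\sigma)}q^{\ell(\sigma)},\] the sum being extended over all compositions $\sigma$ of all nonnegative integers (including the empty composition) that avoid every word of $\mathcal{L}$ as a subword, where $\ell(\sigma)$ is the number of parts of $\sigma$ and $w(\sigma)$ is the sum of the parts of $\sigma$. Then, as formal power series, \[F(x,q)=\frac{1}{1-\frac{qx}{1-x}+\sum_{j=1}^{k}\frac{x^{w(S_j)}q^{\ell(S_j)}}{c_{jj}(x,q)}}.\]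
   Context: A composition is regarded as a word $a_1a_2\cdots a_m$ over the alphabet of positive integers; the weight of a letter $u$ is $w(u)=u$ and the weight $w$ of a word is the sum of the weights of its letters; the length $\ell$ is the number of letters. A word $\sigma$ contains $S$ as a subword if $S$ occurs as a block of consecutive letters of $\sigma$; $\sigma$ avoids $S$ otherwise. Correlation: for words $X=a_0a_1\cdots a_{m-1}$ (of length $m$) and $Y$, and $0\le j\le m-1$, put $c_j=1$ if $Y$ has length at least $m-j$ and the prefix $a_0\cdots a_{m-1-j}$ of $X$ equals the suffix of $Y$ of length $m-j$ (i.e. after aligning right ends and shifting $Y$ $j$ places to the left, the overlapping parts agree), and $c_j=0$ otherwise. The correlation polynomial of $X$ on $Y$ is \[c_{XY}(x,q)=c_0+c_1x^{w(a_{m-1})}q+c_2x^{w(a_{m-2}a_{m-1})}q^2+\dots+c_{m-1}x^{w(a_1a_2\cdots a_{m-1})}q^{m-1},\] i.e. $c_{XY}(x,q)=\sum_{j=0}^{m-1}c_j\,x^{w(a_{m-j}\cdots a_{m-1})}q^{j}$. We write $c_{ij}(x,q)=c_{S_iS_j}(x,q)$. *)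

From mathcomp Require Import all_boot all_order all_algebra.
Set Implicit Arguments. Unset Strict Implicit. Unset Printing Implicit Defensive.
Import GRing.Theory Num.Theory.
Local Open Scope ring_scope.

Definition word := seq nat.
Definition is_comp (s : word) : bool := all (fun a => (0 < a)%N) s.
(* weight w(s) = sum of the letters; length l(s) = size s *)
Definition wt (s : word) : nat := sumn s.
Definition avoids (s : word) (L : seq word) : bool := all (fun S => ~~ infix S s) L.

(* Formal power series in two variables x, q with integer coefficients:
   f n m = coefficient of x^n q^m. *)
Definition ser := nat -> nat -> int.
Definition szero : ser := fun _ _ => 0.
Definition sone : ser := fun n m => ((n == 0%N) && (m == 0%N))%:R.
Definition smono (a b : nat) : ser := fun n m => ((n == a) && (m == b))%:R.
Definition sadd (f g : ser) : ser := fun n m => f n m + g n m.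
Definition sopp (f : ser) : ser := fun n m => - f n m.
Definition ssub (f g : ser) : ser := sadd f (sopp g).
Definition smul (f g : ser) : ser := fun n m =>
  \sum_(i < n.+1) \sum_(j < m.+1) f i j * g (n - i)%N (m - j)%N.
Definition spow (f : ser) (k : nat) : ser := iter k (smul f) sone.
Definition sbig (fs : seq ser) : ser := foldr sadd szero fs.
(* Formal inverse of a series f with constant term 1, as the geometric series
   sum_k (1 - f)^k; since 1 - f has no constant term, only k <= n + m
   contribute to the coefficient of x^n q^m. *)
Definition sinv (f : ser) : ser := fun n m =>
  \sum_(k < (n + m).+1) spow (ssub sone f) k n m.

(* Correlation polynomial c_{XY}(x,q) = sum_{j<m} c_j x^{w(a_{m-j}..a_{m-1})} q^j,
   m = size X, c_j = 1 iff size Y >= m-j and the prefix of X of length m-j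
   equals the suffix of Y of length m-j. *)
Definition corr (X Y : word) : ser :=
  let m := size X in
  sbig [seq (if ((m - j) <= size Y)%N &&
                (take (m - j) X == drop (size Y - (m - j)) Y)
             then smono (wt (drop (m - j) X)) j else szero) | j <- iota 0 m].

(* compositions of n with m parts avoiding L, encoded as m-tuples of 'I_(n+1)
   (every part of a composition of n is at most n) *)
Definition good_tuple (L : seq word) (n m : nat) (t : m.-tuple 'I_n.+1) : bool :=
  let s := map (@nat_of_ord _) t in
  [&& is_comp s, wt s == n & avoids s L].
Definition comps_count (L : seq word) (n m : nat) : nat :=
  #|[pred t : m.-tuple 'I_n.+1 | good_tuple L t]|.
Definition Fgen (L : seq word) : ser := fun n m => (comps_count L n m)%:R.

From mathcomp Require Import all_boot all_order all_algebra.
From mathcomp Require Import zify ring.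
From Stdlib Require Import FunctionalExtensionality.
Set Implicit Arguments. Unset Strict Implicit. Unset Printing Implicit Defensive.
Import GRing.Theory Num.Theory.
Local Open Scope ring_scope.

(* Let F count the L-avoiding compositions and, for s in L, let G_s count the
   compositions whose only occurrence of a word of L is a final occurrence of
   s.  Deleting the last part of a nonempty composition whose remaining prefix
   avoids L gives  F * qx/(1-x) = F - 1 + sum_s G_s.  Appending s to an
   L-avoiding composition u, the first occurrence of a word of L in u s ends
   inside the final s; since L is reduced and cross correlations vanish it is
   an occurrence of s itself, overlapping the final s in a self-overlap of s.
   Cutting u s after that first occurrence gives  F * x^w(s) q^l(s) = G_s c_ss,
   and eliminating the G_s yields the formula. *)

Lemma ser_ext (f g : ser) : (forall n m, f n m = g n m) -> f = g.
Proof. by move=> fg; do 2 apply: functional_extensionality => ?; apply: fg. Qed.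

Lemma sum_antidiagC n (F : nat -> nat -> int) :
  \sum_(i < n.+1) F i (n - i)%N = \sum_(i < n.+1) F (n - i)%N i.
Proof.
rewrite (reindex_inj rev_ord_inj) /=; apply: eq_bigr => i _.
by rewrite subSS subKn // -ltnS.
Qed.

Lemma sum_antidiagA n (G : nat -> nat -> nat -> int) :
  \sum_(i < n.+1) \sum_(k < i.+1) G k (i - k)%N (n - i)%N =
  \sum_(k < n.+1) \sum_(l < (n - k).+1) G k l (n - k - l)%N.
Proof.
elim: n G => [|n IH] G; first by rewrite !big_ord_recl !big_ord0.
rewrite big_ord_recr /=.
transitivity (\sum_(i < n.+1) \sum_(k < i.+1) G k (i - k)%N (n - i).+1
   + \sum_(k < n.+2) G k (n.+1 - k)%N 0%N).
  congr (_ + _); last by rewrite subnn.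
  by apply: eq_bigr => i _; apply: eq_bigr => k _; rewrite subSn // -ltnS.
rewrite (IH (fun k l r => G k l r.+1)) [in RHS]big_ord_recr /= subnn.
rewrite big_ord1 sub0n [X in _ + X]big_ord_recr /= subnn addrA; congr (_ + _).
rewrite -big_split /=; apply: eq_bigr => k _.
have le_kn : (k <= n)%N by rewrite -ltnS.
rewrite subSn // [in RHS]big_ord_recr /= subnn; congr (_ + _).
apply: eq_bigr => l _; congr (G _ _ _).
by rewrite subSn // -ltnS.
Qed.

Lemma sum_ord_delta n a (F : nat -> int) :
  \sum_(i < n.+1) ((i == a :> nat)%:R * F i) = if (a <= n)%N then F a else 0.
Proof.
case: ifP => le_an.
  rewrite (bigD1 (Ordinal (le_an : (a < n.+1)%N))) //= eqxx mul1r big1 ?addr0 //.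
  move=> i ne_ia; suff /negbTE -> : (i != a :> nat) by rewrite mul0r.
  by apply: contra ne_ia => /eqP eq_ia; apply/eqP/val_inj.
apply: big1 => i _; suff /negbTE -> : (i != a :> nat) by rewrite mul0r.
by apply/eqP => eq_ia; move: (ltn_ord i); rewrite eq_ia ltnS le_an.
Qed.

Lemma smulC f g : smul f g = smul g f.
Proof.
apply: ser_ext => n m; rewrite /smul.
rewrite (sum_antidiagC n (fun i i' => \sum_(j < m.+1) f i j * g i' (m - j)%N)).
apply: eq_bigr => i _.
rewrite (sum_antidiagC m (fun j j' => f (n - i)%N j * g i j')).
by apply: eq_bigr => j _; rewrite mulrC.
Qed.

Lemma smulA f g h : smul (smul f g) h = smul f (smul g h).
Proof.
apply: ser_ext => n m; rewrite /smul.
transitivity (\sum_(i < n.+1) \sum_(i1 < i.+1) \sum_(j < m.+1) \sum_(j1 < j.+1)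
   f i1 j1 * g (i - i1)%N (j - j1)%N * h (n - i)%N (m - j)%N).
  apply: eq_bigr => i _; rewrite exchange_big /=; apply: eq_bigr => j _.
  by rewrite mulr_suml; apply: eq_bigr => i1 _; rewrite mulr_suml.
transitivity (\sum_(i < n.+1) \sum_(i1 < i.+1)
   (fun a b c => \sum_(j1 < m.+1) \sum_(j2 < (m - j1).+1)
      f a j1 * g b j2 * h c (m - j1 - j2)%N) i1 (i - i1)%N (n - i)%N).
  apply: eq_bigr => i _; apply: eq_bigr => i1 _.
  exact: (sum_antidiagA m (fun a b c => f i1 a * g (i - i1)%N b * h (n - i)%N c)).
rewrite (sum_antidiagA n (fun a b c => \sum_(j1 < m.+1) \sum_(j2 < (m - j1).+1)
  f a j1 * g b j2 * h c (m - j1 - j2)%N)); apply: eq_bigr => i1 _.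
rewrite exchange_big /=; apply: eq_bigr => j1 _.
rewrite mulr_sumr; apply: eq_bigr => i2 _.
by rewrite mulr_sumr; apply: eq_bigr => j2 _; rewrite mulrA.
Qed.

Lemma smul1l g : smul sone g = g.
Proof.
apply: ser_ext => n m; rewrite /smul big_ord_recl [X in _ + X]big1; last first.
  by move=> i _; apply: big1 => j _; rewrite /sone /= mul0r.
rewrite addr0 big_ord_recl [X in _ + X]big1; last first.
  by move=> j _; rewrite /sone /= mul0r.
by rewrite addr0 /sone /= mul1r !subn0.
Qed.

Lemma smul1r g : smul g sone = g.
Proof. by rewrite smulC smul1l. Qed.

Lemma smul0l h : smul szero h = szero.
Proof.
apply: ser_ext => n m; rewrite /smul big1 // => i _.
by rewrite big1 // => j _; rewrite mul0r.
Qed.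

Lemma smulDl f g h : smul (sadd f g) h = sadd (smul f h) (smul g h).
Proof.
apply: ser_ext => n m; rewrite /smul /sadd -big_split; apply: eq_bigr => i _.
by rewrite -big_split; apply: eq_bigr => j _; rewrite mulrDl.
Qed.

Lemma smulBl f g h : smul (ssub f g) h = ssub (smul f h) (smul g h).
Proof.
rewrite /ssub smulDl; congr sadd.
apply: ser_ext => n m; rewrite /smul /sopp -sumrN; apply: eq_bigr => i _.
by rewrite -sumrN; apply: eq_bigr => j _; rewrite mulNr.
Qed.

Lemma smulDr f g h : smul f (sadd g h) = sadd (smul f g) (smul f h).
Proof. by rewrite smulC smulDl !(smulC f). Qed.

Lemma smulBr f g h : smul f (ssub g h) = ssub (smul f g) (smul f h).
Proof. by rewrite smulC smulBl !(smulC f). Qed.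

Lemma smul_sbigl fs h : smul (sbig fs) h = sbig [seq smul f h | f <- fs].
Proof. by elim: fs => [|f fs IH] /=; rewrite ?smul0l // smulDl IH. Qed.

Lemma smul_sbigr f fs : smul f (sbig fs) = sbig [seq smul f g | g <- fs].
Proof. by rewrite smulC smul_sbigl; congr sbig; apply: eq_map => g; rewrite smulC. Qed.

Lemma sbigE fs n m : sbig fs n m = \sum_(f <- fs) f n m.
Proof. by elim: fs => [|f fs IH]; rewrite ?big_nil ?big_cons //= /sadd IH. Qed.

Lemma smul_smonoE a b g n m :
  smul (smono a b) g n m =
  if (a <= n)%N && (b <= m)%N then g (n - a)%N (m - b)%N else 0.
Proof.
rewrite /smul /smono.
transitivity (\sum_(i < n.+1) ((i == a :> nat)%:R *
   \sum_(j < m.+1) ((j == b :> nat)%:R * g (n - i)%N (m - j)%N))).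
  apply: eq_bigr => i _; rewrite mulr_sumr; apply: eq_bigr => j _.
  by rewrite mulrA -natrM mulnb.
rewrite (sum_ord_delta n a (fun i => \sum_(j < m.+1) ((j == b :> nat)%:R * g (n - i)%N (m - j)%N))).
rewrite (sum_ord_delta m b (fun j => g (n - a)%N (m - j)%N)).
by case: (a <= n)%N; case: (b <= m)%N.
Qed.

Lemma smonoM a b c d : smul (smono a b) (smono c d) = smono (a + c) (b + d).
Proof.
apply: ser_ext => n m; rewrite smul_smonoE /smono.
case: (leqP a n) => [le_an|lt_na] /=; last first.
  by rewrite ltn_eqF //; lia.
case: (leqP b m) => [le_bm|lt_mb] /=; last first.
  by rewrite [m == _]ltn_eqF ?andbF //; lia.
by rewrite -(eqn_add2l a (n - a)) -(eqn_add2l b (m - b)) !subnKC.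
Qed.

(* [spow h k] has no terms of total degree below [k] when [h] has no constant
   term; this is what makes the truncated geometric series in [sinv] exact. *)
Lemma spow_coef_low h k n m :
  h 0%N 0%N = 0 -> (n + m < k)%N -> spow h k n m = 0.
Proof.
move=> h00; elim: k n m => [|k IH] n m //= lt_nm_k.
rewrite /smul big1 // => i _; rewrite big1 // => j _.
case: (posnP i) => [i0|i_gt0]; case: (posnP j) => [j0|j_gt0].
- by rewrite i0 j0 h00 mul0r.
all: by rewrite IH ?mulr0 //; have := ltn_ord i; have := ltn_ord j; lia.
Qed.

Lemma smul_eq_local f g g' n m :
  (forall i j, (i <= n)%N -> (j <= m)%N -> g i j = g' i j) ->
  smul f g n m = smul f g' n m.
Proof.
move=> eq_gg'; rewrite /smul; apply: eq_bigr => i _; apply: eq_bigr => j _.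
by rewrite eq_gg' // leq_subr.
Qed.

Lemma smul_sumr f K (G : nat -> ser) n m :
  smul f (fun a b => \sum_(k < K) G k a b) n m = \sum_(k < K) smul f (G k) n m.
Proof.
rewrite /smul.
transitivity (\sum_(i < n.+1) \sum_(k < K) \sum_(j < m.+1) f i j * G k (n - i)%N (m - j)%N).
  apply: eq_bigr => i _; rewrite exchange_big /=; apply: eq_bigr => j _.
  by rewrite mulr_sumr.
by rewrite exchange_big.
Qed.

Lemma smul_sinv f : f 0%N 0%N = 1 -> smul f (sinv f) = sone.
Proof.
move=> f00; set h := ssub sone f.
have h00 : h 0%N 0%N = 0 by rewrite /h /ssub /sadd /sopp /sone f00 subrr.
have fE : f = ssub sone h.
  by apply: ser_ext => a b; rewrite /h /ssub /sadd /sopp opprD opprK addrA subrr add0r.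
apply: ser_ext => n m.
rewrite (@smul_eq_local f (sinv f) (fun a b => \sum_(k < (n + m).+1) spow h k a b));
  last first.
  move=> i j le_in le_jm; rewrite /sinv -/h.
  rewrite (big_ord_widen (n + m).+1 (fun k => spow h k i j)) ?ltnS ?leq_add //.
  rewrite big_mkcond /=; apply: eq_bigr => k _; case: ifP => // lt_k.
  by rewrite spow_coef_low // ltnNge -ltnS lt_k.
rewrite smul_sumr.
transitivity (\sum_(k < (n + m).+1) (spow h k n m - spow h k.+1 n m)).
  by apply: eq_bigr => k _; rewrite {1}fE smulBl smul1l.
have top0 : spow h (n + m).+1 n m = 0 by rewrite spow_coef_low.
rewrite sumrB big_ord_recl [X in _ - X]big_ord_recr /= -[smul h _]/(spow h (n + m).+1) top0 addr0.
by under eq_bigr do rewrite add0n; rewrite addrK.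
Qed.

Lemma smul_sinv_eq f g k : f 0%N 0%N = 1 -> smul g f = k -> g = smul k (sinv f).
Proof. by move=> f00 <-; rewrite smulA smul_sinv ?smul1r. Qed.

Lemma sinv_unique f g : f 0%N 0%N = 1 -> smul g f = sone -> g = sinv f.
Proof. by move=> f00 /(smul_sinv_eq f00) ->; rewrite smul1l. Qed.

(* qx/(1-x): one-part compositions, weighted by x^part q. *)
Definition sone_part : ser := fun n m => ((0 < n)%N && (m == 1%N))%:R.

Lemma sone_partE :
  smul (smul (smono 0 1) (smono 1 0)) (sinv (ssub sone (smono 1 0))) = sone_part.
Proof.
symmetry; apply: smul_sinv_eq => //.
rewrite smonoM smulC smulBl smul1l.
apply: ser_ext => n m; rewrite /ssub /sadd /sopp smul_smonoE /sone_part /smono /=.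
by case: n => [|[|n]] /=; rewrite ?subr0 ?subn0 ?addn0 ?subrr.
Qed.

Definition comps (n m : nat) : seq word :=
  [seq z <- [seq map (@nat_of_ord n.+1) (tval t) | t : m.-tuple 'I_n.+1]
     | is_comp z && (wt z == n)].

Lemma comps_uniq n m : uniq (comps n m).
Proof.
apply: filter_uniq; rewrite map_inj_uniq ?enum_uniq //.
by move=> t1 t2 /(inj_map val_inj) /val_inj.
Qed.

Lemma leq_mem_sumn (a : nat) (z : word) : a \in z -> (a <= sumn z)%N.
Proof.
elim: z => [|b z IH] //=; rewrite in_cons => /orP[/eqP->|/IH le_az].
  by rewrite leq_addr.
by rewrite (leq_trans le_az) // leq_addl.
Qed.

Lemma mem_comps n m z : (z \in comps n m) = [&& is_comp z, wt z == n & size z == m].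
Proof.
rewrite mem_filter.
apply/andP/and3P => [[/andP[cz wz] /mapP[t _ zt]]|[cz wz sz]].
  by split => //; rewrite zt size_map size_tuple.
split; first by rewrite cz.
have sz' : size (map (@inord n) z) == m by rewrite size_map.
apply/mapP; exists (Tuple sz'); first by rewrite mem_enum.
rewrite /= -map_comp map_id_in // => a az /=; rewrite inordK // ltnS.
by rewrite -(eqP wz) leq_mem_sumn.
Qed.

Definition sgf (P : word -> bool) : ser := fun n m => \sum_(z <- comps n m) (P z)%:R.

Lemma Fgen_sgf L : Fgen L = sgf (avoids^~ L).
Proof.
apply: ser_ext => n m; rewrite /Fgen /sgf /comps_count /comps big_filter big_map.
rewrite big_enum_cond /= -sum1_card natr_sum big_mkcond /= [in RHS]big_mkcond /=.
apply: eq_bigr => t _; rewrite /good_tuple inE.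
by case: (is_comp _) => //=; case: (wt _ == n) => //=; case: (avoids _ _).
Qed.

Lemma is_comp_cat u v : is_comp (u ++ v) = is_comp u && is_comp v.
Proof. exact: all_cat. Qed.

Lemma is_comp_drop k (s : word) : is_comp s -> is_comp (drop k s).
Proof. by rewrite -{1}(cat_take_drop k s) is_comp_cat => /andP[]. Qed.

Lemma wt_cat u v : wt (u ++ v) = (wt u + wt v)%N.
Proof. exact: sumn_cat. Qed.

Lemma cat_injl (r : word) : injective (cat^~ r).
Proof.
move=> u1 u2 /= eq_u12; have size_u12 : size u1 = size u2.
  by move/(congr1 size): eq_u12; rewrite !size_cat => /addIn.
by move/eqP: eq_u12; rewrite eqseq_cat // => /andP[/eqP].
Qed.

(* Multiplying by x^w(r) q^l(r) appends the composition [r]. *)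
Lemma smul_smono_comps r (f : word -> int) n m : is_comp r ->
  smul (smono (wt r) (size r)) (fun a b => \sum_(u <- comps a b) f u) n m =
  \sum_(z <- comps n m) (suffix r z)%:R * f (take (m - size r) z).
Proof.
move=> cr; rewrite smul_smonoE.
transitivity (\sum_(z <- comps n m | suffix r z) f (take (m - size r) z)); last first.
  by rewrite big_mkcond; apply: eq_bigr => z _; case: suffix; rewrite ?mul1r ?mul0r.
case: ifP => [/andP[le_wn le_sm]|small].
  symmetry; rewrite -big_filter (perm_big [seq u ++ r | u <- comps (n - wt r) (m - size r)]).
    rewrite big_map big_seq [RHS]big_seq; apply: eq_bigr => u.
    by rewrite mem_comps => /and3P[_ _ /eqP <-]; rewrite take_size_cat.
  apply: uniq_perm; first exact: filter_uniq (comps_uniq _ _).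
    by rewrite map_inj_uniq ?comps_uniq //; apply: cat_injl.
  move=> z; rewrite mem_filter mem_comps; apply/idP/mapP.
    case/and4P => /suffixP[u ->]; rewrite is_comp_cat wt_cat size_cat.
    case/andP=> cu _ /eqP <- /eqP <-; exists u => //.
    by rewrite mem_comps cu !addnK !eqxx.
  case=> u; rewrite mem_comps => /and3P[cu /eqP wu /eqP su] ->.
  by rewrite suffix_suffix is_comp_cat wt_cat size_cat cu cr wu su !subnK ?eqxx.
rewrite big1_seq // => z /andP[/suffixP[u ->]].
rewrite mem_comps is_comp_cat wt_cat size_cat => /and3P[_ /eqP wz /eqP sz].
by move: small; rewrite -wz -sz !leq_addl.
Qed.

Lemma sum_comps_nil n m : \sum_(z <- comps n m) ((z == [::])%:R : int) = sone n m.
Proof.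
case nil_nm: ([::] \in comps n m).
  rewrite (bigD1_seq [::]) ?comps_uniq //= big1_seq ?addr0; last first.
    by move=> z /andP[/negbTE ->].
  by move: nil_nm; rewrite mem_comps /sone /= => /andP[/eqP <- /eqP <-].
rewrite big1_seq; last first.
  by move=> z /andP[_ zc]; case: eqP => // z0; move: nil_nm; rewrite -z0 zc.
by move: nil_nm; rewrite mem_comps /sone /= eq_sym [0%N == m]eq_sym => ->.
Qed.

Lemma sum_last_part n (z : word) : is_comp z -> wt z = n ->
  \sum_(i < n.+1) ((0 < i)%N%:R * ((suffix [:: nat_of_ord i] z)%:R : int)) =
  (z != [::])%:R.
Proof.
case/lastP: z => [|z a] cz wz; first by rewrite big1 // => i _; rewrite mulr0.
have a_z : a \in rcons z a by rewrite mem_rcons mem_head.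
transitivity (\sum_(i < n.+1) ((i == a :> nat)%:R * ((0 < i)%N%:R : int))).
  apply: eq_bigr => i _; rewrite mulrC.
  by rewrite -[[:: _]]/(rcons [::] _) suffix_rcons suffix0s andbT.
rewrite (sum_ord_delta n a (fun i => ((0 < i)%N%:R : int))).
by rewrite -wz leq_mem_sumn //= (allP cz a a_z); case: z {cz wz a_z}.
Qed.

Lemma suffix_of_suffix (a b z : word) :
  suffix a z -> suffix b z -> (size a <= size b)%N -> suffix a b.
Proof.
rewrite -!prefix_rev !prefixE !size_rev => /eqP az /eqP bz le_ab.
by rewrite -[in X in take _ X]bz take_takel ?size_rev // az.
Qed.

Lemma suffix_dropE (r z : word) : suffix r z -> drop (size z - size r) z = r.
Proof. by rewrite suffixE => /eqP. Qed.

Lemma avoids_infix (u z : word) L : infix u z -> avoids z L -> avoids u L.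
Proof.
move=> uz /allP zL; apply/allP => s sL; apply: contra (zL s sL) => su.
exact: infix_trans su uz.
Qed.

Lemma avoids_take k k' (z : word) L :
  (k <= k')%N -> avoids (take k' z) L -> avoids (take k z) L.
Proof. by move=> le_kk'; apply: avoids_infix; rewrite -(take_takel z le_kk') infix_take. Qed.

Lemma avoids_nil L : all (fun s => s != [::]) L -> avoids [::] L.
Proof. by move=> /allP nilL; apply/allP => s sL; rewrite infixs0 nilL. Qed.

Lemma infix_avoidsF (s z : word) L : s \in L -> infix s z -> avoids z L = false.
Proof. by move=> sL sz; apply/negbTE/negP => /allP /(_ s sL); rewrite sz. Qed.

Lemma avoids_rcons (z : word) a L : avoids z L -> ~~ avoids (rcons z a) L ->
  exists2 s, s \in L & suffix s (rcons z a).
Proof.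
move=> zL; case/allPn => s sL; rewrite negbK infix_rconsl => /orP[|sz]; first by exists s.
by move: (allP zL s sL); rewrite sz.
Qed.

Definition overlap (X Y : word) (j : nat) : bool :=
  ((size X - j) <= size Y)%N && (take (size X - j) X == drop (size Y - (size X - j)) Y).

Lemma smul_corrE (X Y : word) (G : ser) n m :
  smul G (corr X Y) n m =
  \sum_(j <- iota 0 (size X))
    (overlap X Y j)%:R * smul (smono (wt (drop (size X - j) X)) j) G n m.
Proof.
rewrite smulC /corr smul_sbigl sbigE -map_comp big_map; apply: eq_bigr => j _ /=.
by rewrite /overlap; case: ifP; rewrite ?mul1r ?mul0r ?smul0l.
Qed.

Lemma corr_coefE (X Y : word) j : (j < size X)%N ->
  corr X Y (wt (drop (size X - j) X)) j = (overlap X Y j)%:R.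
Proof.
move=> lt_jX; rewrite /corr sbigE big_map.
rewrite (bigD1_seq j) ?mem_iota ?iota_uniq //= big1 ?addr0.
  by rewrite /overlap; case: ifP; rewrite /smono /szero ?eqxx.
move=> j' ne_j'j; case: ifP => // _.
by rewrite /smono [j == j']eq_sym (negbTE ne_j'j) andbF.
Qed.

Lemma corr_refl00 (s : word) : s != [::] -> corr s s 0%N 0%N = 1.
Proof.
move=> s0; have s_gt0 : (0 < size s)%N by case: (s) s0.
have := corr_coefE s s_gt0; rewrite subn0 drop_size /wt /= => ->.
by rewrite /overlap subn0 leqnn take_size subnn drop0 eqxx.
Qed.

(* The hypotheses of the theorem, stated on members of [L] rather than on
   indices. *)
Definition reduced_free (L : seq word) : Prop :=
  [/\ all is_comp L, all (fun s => s != [::]) L, uniq L,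
      (forall s s', s \in L -> s' \in L -> s != s' -> ~~ infix s s') &
      (forall s s', s \in L -> s' \in L -> s != s' -> forall j, (j < size s)%N ->
         ~~ overlap s s' j)].

Lemma reduced_free_nth (L : seq word) :
  all is_comp L ->
  all (fun s => s != [::]) L ->
  (forall i j : nat, (i < size L)%N -> (j < size L)%N -> i != j ->
     ~~ infix (nth [::] L i) (nth [::] L j)) ->
  (forall i j : nat, (i < size L)%N -> (j < size L)%N -> i != j ->
     forall n m : nat, corr (nth [::] L i) (nth [::] L j) n m = 0) ->
  reduced_free L.
Proof.
move=> compL nilL reducedL corrL.
have uniqL : uniq L.
  apply/(uniqPn [::]) => -[i [j [lt_ij lt_jL eq_ij]]].
  have := reducedL i j (ltn_trans lt_ij lt_jL) lt_jL (negbT (ltn_eqF lt_ij)).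
  by rewrite eq_ij infix_refl.
have index_neq s s' : s \in L -> s' \in L -> s != s' -> index s L != index s' L.
  by move=> sL s'L; apply: contra => /eqP eq_idx; rewrite -(nth_index [::] sL) eq_idx nth_index.
split => // s s' sL s'L ne_ss'.
  have := reducedL _ _ _ _ (index_neq _ _ sL s'L ne_ss').
  by rewrite !index_mem !nth_index //; apply.
move=> j lt_js; have := corrL _ _ _ _ (index_neq _ _ sL s'L ne_ss').
rewrite !index_mem !nth_index // => /(_ sL s'L (wt (drop (size s - j) s)) j).
by rewrite corr_coefE //; case: overlap.
Qed.

Definition first_hit (L : seq word) (s z : word) : bool :=
  suffix s z && avoids (take (size z).-1 z) L.

(* [u s] (with [u] avoiding [L]) has its first hit at [size z - j], where [s]
   overlaps the final [s] with shift [j]. *)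
Definition overlap_hit L (s z : word) j : bool :=
  [&& overlap s s j, suffix (drop (size s - j) s) z & first_hit L s (take (size z - j) z)].

Section ReducedFree.

Variable L : seq word.
Hypothesis freeL : reduced_free L.

Lemma suffix_uniq_reduced (s s' z : word) : s \in L -> s' \in L ->
  suffix s z -> suffix s' z -> s = s'.
Proof.
have [_ _ _ reducedL _] := freeL.
move=> sL s'L sz s'z; apply/eqP/negPn/negP => ne_ss'.
case: (leqP (size s) (size s')) => cmp.
  by move: (reducedL _ _ sL s'L ne_ss'); rewrite suffixW // (suffix_of_suffix sz s'z cmp).
move: (reducedL _ _ s'L sL); rewrite eq_sym => /(_ ne_ss').
by rewrite suffixW // (suffix_of_suffix s'z sz (ltnW cmp)).
Qed.

Lemma avoids_belastE (z : word) :
  ((z != [::])%:R * (avoids (take (size z).-1 z) L)%:R : int) =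
  (avoids z L)%:R - (z == [::])%:R + \sum_(s <- L) (first_hit L s z)%:R.
Proof.
have [_ nilL uniqL _ _] := freeL.
case/lastP: z => [|z a].
  rewrite /= avoids_nil // mul0r subrr add0r big1_seq // => s /andP[_ sL].
  by rewrite /first_hit suffixs0 (negbTE (allP nilL s sL)).
have za0 : rcons z a != [::] by case: (z).
have belast_za : take (size (rcons z a)).-1 (rcons z a) = z.
  by rewrite size_rcons /= -cats1 take_size_cat.
rewrite za0 (negbTE za0) belast_za mul1r subr0.
under eq_bigr do rewrite /first_hit belast_za.
case zL: (avoids z L); last first.
  rewrite big1 => [|s _]; last by rewrite andbF.
  by rewrite (contraFF (avoids_infix (infix_rcons z a))).
case zaL: (avoids (rcons z a) L).
  rewrite big1_seq ?addr0 // => s /andP[_ sL]; rewrite andbT.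
  by case sza: suffix => //; rewrite (infix_avoidsF sL (suffixW sza)) in zaL.
have [s0 s0L s0za] := avoids_rcons zL (negbT zaL).
rewrite (bigD1_seq s0) //= s0za big1_seq ?addr0 ?add0r // => s /andP[ne_ss0 sL].
rewrite andbT; case sza: suffix => //.
by rewrite (suffix_uniq_reduced sL s0L sza s0za) eqxx in ne_ss0.
Qed.

Lemma overlap_hit_suffix (s z : word) j : s \in L -> (j < size s)%N -> overlap_hit L s z j ->
  suffix s z && avoids (take (size z - size s) z) L.
Proof.
move=> sL lt_js /and3P[ov_j dz /andP[sz' avz']].
have le_s_zj : (size s <= size z - j)%N.
  by have := size_suffix sz'; rewrite size_takel // leq_subr.
rewrite size_takel ?leq_subr // take_takel ?leq_pred // in avz'.
rewrite (avoids_take _ avz') ?andbT; last by lia.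
have drop_zj : drop (size z - j) z = drop (size s - j) s.
  by have := suffix_dropE dz; rewrite size_drop (subKn (ltnW lt_js)).
case/suffixP: sz' => v zj_E.
have zE := cat_take_drop (size z - j) z; rewrite zj_E drop_zj in zE.
move: ov_j; rewrite /overlap (subKn (ltnW lt_js)) leq_subr /= => /eqP ov_j.
have sE : s ++ drop (size s - j) s = take j s ++ s.
  by rewrite -{1}(cat_take_drop j s) -ov_j -catA cat_take_drop.
by apply/suffixP; exists (v ++ take j s); rewrite -zE -!catA sE.
Qed.

(* The first occurrence of a word of [L] in [v ++ take k s], if it ends inside
   [take k s], can only be [s]: a shorter word would be a factor of [s], a
   longer one would overlap [s]. *)
Lemma suffix_take_reduced (s s' v : word) k : s \in L -> s' \in L ->
  (0 < k <= size s)%N -> suffix s' (v ++ take k s) -> s' = s.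
Proof.
have [_ _ _ reducedL freeLL] := freeL.
move=> sL s'L /andP[k_gt0 le_ks] s'vk; apply/eqP/negPn/negP => ne_s's.
have ks := suffix_suffix v (take k s).
have size_ks : size (take k s) = k by rewrite size_takel.
case: (leqP (size s') k) => cmp.
  have s'_ks : suffix s' (take k s) by apply: (suffix_of_suffix s'vk ks); rewrite size_ks.
  move: (reducedL _ _ s'L sL ne_s's).
  by rewrite (infix_trans (suffixW s'_ks) (infix_take _ _)).
have ks_s' : suffix (take k s) s' by apply: (suffix_of_suffix ks s'vk); rewrite size_ks ltnW.
have := suffix_dropE ks_s'; rewrite size_ks => drop_s'.
have lt_ks : (size s - k < size s)%N by lia.
have ne_ss' : s != s' by rewrite eq_sym.
have := freeLL _ _ sL s'L ne_ss' _ lt_ks.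
by rewrite /overlap (subKn le_ks) (ltnW cmp) drop_s' eqxx.
Qed.

Lemma first_prefix_hit (z : word) : ~~ avoids z L ->
  exists2 p, (forall p', ~~ avoids (take p' z) L -> p <= p')%N &
  [/\ ~~ avoids (take p z) L, avoids (take p.-1 z) L &
      exists2 s, s \in L & suffix s (take p z)].
Proof.
move=> zL; have hit : exists p, ~~ avoids (take p z) L by exists (size z); rewrite take_size.
case: (ex_minnP hit) => p hit_p min_p; exists p => //.
have p_gt0 : (0 < p)%N by case: p hit_p {min_p} => //; rewrite take0 avoids_nil //; case: freeL.
have belast_p : avoids (take p.-1 z) L.
  by apply/negPn/negP => /min_p; case: p p_gt0 {hit_p min_p} => //= p _; rewrite ltnn.
split => //; have le_pz : (p <= size z)%N by apply: min_p; rewrite take_size.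
have lt_pz : (p.-1 < size z)%N by lia.
have ztake := take_nth 0%N lt_pz; rewrite prednK // in ztake.
by rewrite ztake; apply: avoids_rcons belast_p _; rewrite -ztake.
Qed.

Lemma overlap_hit_unique (s u : word) : s \in L -> avoids u L ->
  exists2 j0, (j0 < size s)%N &
    forall j, (j < size s)%N -> overlap_hit L s (u ++ s) j = (j == j0).
Proof.
move=> sL uL.
have zL : ~~ avoids (u ++ s) L by rewrite (infix_avoidsF sL (suffixW (suffix_suffix u s))).
case: (first_prefix_hit zL) => p min_p [hit_p belast_p [s' s'L s'p]].
have lt_up : (size u < p)%N.
  by rewrite ltnNge; apply: contra hit_p => le_pu; rewrite (avoids_take le_pu) // take_size_cat.
have le_pz : (p <= size u + size s)%N.
  by rewrite -size_cat min_p // take_size.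
set k := (p - size u)%N.
have take_p : take p (u ++ s) = u ++ take k s by rewrite take_cat ltnNge (ltnW lt_up).
have ks : suffix (take k s) (take p (u ++ s)) by rewrite take_p suffix_suffix.
rewrite take_p in s'p ks.
have le_ks : (k <= size s)%N by rewrite /k leq_subLR.
have range_k : (0 < k <= size s)%N by rewrite le_ks subn_gt0 lt_up.
have s'E := suffix_take_reduced sL s'L range_k s'p; subst s'.
have ks_s : suffix (take k s) s by apply: (suffix_of_suffix ks s'p); rewrite size_takel.
have := suffix_dropE ks_s; rewrite size_takel // => drop_ks.
have p_E : (size (u ++ s) - (size s - k))%N = p by rewrite size_cat /k; lia.
exists (size s - k)%N => [|j lt_js]; first by rewrite /k; lia.
apply/idP/eqP => [/and3P[_ _ /andP[hit_j belast_j]]|->].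
  have := min_p _ (negbT (infix_avoidsF sL (suffixW hit_j))).
  rewrite size_takel ?leq_subr // take_takel ?leq_pred // in belast_j.
  have : ((size (u ++ s) - j).-1 < p)%N.
    by rewrite ltnNge; apply: contra hit_p => le; rewrite (avoids_take le).
  rewrite size_cat /k; lia.
rewrite /overlap_hit /first_hit /overlap (subKn le_ks) le_ks drop_ks eqxx p_E.
rewrite size_takel ?take_takel ?leq_pred // ?take_p ?s'p ?belast_p //=; last first.
  by rewrite size_cat; lia.
by rewrite andbT suffix_catr ?suffix_drop.
Qed.

Lemma suffix_avoidsE (s z : word) : s \in L ->
  ((suffix s z && avoids (take (size z - size s) z) L)%:R : int) =
  \sum_(j <- iota 0 (size s)) (overlap_hit L s z j)%:R.
Proof.
move=> sL; case hit: (suffix s z && _).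
  case/andP: hit => /suffixP[u ->]; rewrite size_cat addnK take_size_cat // => uL.
  have [j0 lt_j0 hitE] := overlap_hit_unique sL uL.
  rewrite (bigD1_seq j0) ?mem_iota ?iota_uniq //= hitE // eqxx big1_seq ?addr0 //.
  by move=> j /andP[ne_jj0]; rewrite mem_iota => /andP[_ lt_js]; rewrite hitE // (negbTE ne_jj0).
rewrite big1_seq // => j; rewrite mem_iota add0n => /andP[_ lt_js].
by case hit_j: overlap_hit => //; rewrite (overlap_hit_suffix sL lt_js hit_j) in hit.
Qed.

Lemma sgf_avoids_mul_sone_part :
  smul (sgf (avoids^~ L)) sone_part =
  sadd (ssub (sgf (avoids^~ L)) sone) (sbig [seq sgf (first_hit L s) | s <- L]).
Proof.
apply: ser_ext => n m; rewrite smulC /smul.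
transitivity (\sum_(i < n.+1) ((0 < i)%N%:R *
    smul (smono (wt [:: nat_of_ord i]) (size [:: nat_of_ord i]))
      (fun a b => \sum_(u <- comps a b) (avoids u L)%:R) n m)).
  apply: eq_bigr => i _; have le_in : (i <= n)%N by rewrite -ltnS.
  rewrite smul_smonoE /wt /= addn0 le_in.
  rewrite (eq_bigr (fun j : 'I_m.+1 => (0 < i)%N%:R * ((j == 1%N :> nat)%:R *
      sgf (avoids^~ L) (n - i)%N (m - j)%N))); last first.
    by move=> j _; rewrite /sone_part mulrA -natrM mulnb.
  rewrite -mulr_sumr (sum_ord_delta m 1 (fun j => sgf (avoids^~ L) (n - i)%N (m - j)%N)).
  by rewrite /sgf; case: (1 <= m)%N.
transitivity (\sum_(z <- comps n m) (avoids (take (m - 1) z) L)%:R *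
   \sum_(i < n.+1) ((0 < i)%N%:R * ((suffix [:: nat_of_ord i] z)%:R : int))).
  rewrite (eq_bigr (fun i : 'I_n.+1 => \sum_(z <- comps n m) ((0 < i)%N%:R *
     ((suffix [:: nat_of_ord i] z)%:R * (avoids (take (m - 1) z) L)%:R) : int))).
    rewrite exchange_big /=; apply: eq_bigr => z _; rewrite mulr_sumr.
    by apply: eq_bigr => i _; rewrite mulrA mulrC.
  move=> i _; rewrite -mulr_sumr; case: (posnP i) => [->|i_gt0]; first by rewrite !mul0r.
  by rewrite smul_smono_comps // /is_comp /= i_gt0.
rewrite big_seq (eq_bigr (fun z => (avoids z L)%:R - (z == [::])%:R +
    \sum_(s <- L) (first_hit L s z)%:R)); last first.
  move=> z; rewrite mem_comps => /and3P[cz /eqP wz /eqP <-].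
  by rewrite sum_last_part // mulrC -avoids_belastE subn1.
rewrite -big_seq !big_split /= sumrN sum_comps_nil /sadd /ssub /sadd /sopp sbigE big_map.
by rewrite exchange_big.
Qed.

Lemma sgf_avoids_mul_smono (s : word) : s \in L ->
  smul (sgf (avoids^~ L)) (smono (wt s) (size s)) = smul (sgf (first_hit L s)) (corr s s).
Proof.
have [compL _ _ _ _] := freeL.
move=> sL; have cs : is_comp s := allP compL s sL.
apply: ser_ext => n m; rewrite smulC /sgf smul_smono_comps // smul_corrE.
symmetry; transitivity (\sum_(j <- iota 0 (size s)) ((overlap s s j)%:R : int) *
  \sum_(z <- comps n m) (suffix (drop (size s - j) s) z)%:R *
                        (first_hit L s (take (m - j) z))%:R).
  rewrite big_seq [RHS]big_seq; apply: eq_bigr => j.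
  rewrite mem_iota add0n => /andP[_ lt_js].
  have size_drop_s : size (drop (size s - j) s) = j by rewrite size_drop subKn // ltnW.
  congr (_ * _); rewrite -{2}size_drop_s -[in RHS]size_drop_s smul_smono_comps ?is_comp_drop //.
  by rewrite size_drop_s.
under eq_bigr do rewrite mulr_sumr.
rewrite exchange_big /= big_seq [RHS]big_seq; apply: eq_bigr => z.
rewrite mem_comps => /and3P[_ _ /eqP <-].
rewrite -natrM mulnb (suffix_avoidsE z sL); apply: eq_bigr => j _.
by rewrite /overlap_hit -!natrM !mulnb andbA.
Qed.

End ReducedFree.

Unset Implicit Arguments.

Theorem theorem2 (L : seq word) :
  all is_comp L ->
  all (fun s => s != [::]) L ->
  (forall i j : nat, (i < size L)%N -> (j < size L)%N -> i != j ->
     ~~ infix (nth [::] L i) (nth [::] L j)) ->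
  (forall i j : nat, (i < size L)%N -> (j < size L)%N -> i != j ->
     forall n m : nat, corr (nth [::] L i) (nth [::] L j) n m = 0) ->
  forall n m : nat,
    Fgen L n m =
    sinv (sadd (ssub sone (smul (smul (smono 0 1) (smono 1 0))
                                (sinv (ssub sone (smono 1 0)))))
               (sbig [seq smul (smono (wt s) (size s)) (sinv (corr s s)) | s <- L]))
         n m.
Proof.
move=> compL nilL reducedL corrL n m.
have freeL := reduced_free_nth compL nilL reducedL corrL.
rewrite sone_partE Fgen_sgf; congr (_ n m); apply: sinv_unique.
  rewrite /sadd /ssub /sadd /sopp /sone /sone_part /= subr0 sbigE big_map big1_seq ?addr0 //.
  move=> s /andP[_ sL]; rewrite smul_smonoE leqn0 [(size s <= 0)%N]leqn0 size_eq0.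
  by rewrite (negbTE (allP nilL s sL)) andbF.
have G_sE : [seq smul (sgf (avoids^~ L)) g
              | g <- [seq smul (smono (wt s) (size s)) (sinv (corr s s)) | s <- L]] =
            [seq sgf (first_hit L s) | s <- L].
  rewrite -map_comp; apply/eq_in_map => s sL /=.
  rewrite -smulA sgf_avoids_mul_smono // smulA smul_sinv ?smul1r //.
  exact/corr_refl00/(allP nilL).
rewrite smulDr smulBr smul1r sgf_avoids_mul_sone_part // smul_sbigr G_sE.
by apply: ser_ext => a b; rewrite /sadd /ssub /sadd /sopp; ring.
Qed.
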